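(* Let $s\ge1$ and let $a_{ij}$ ($i,j=1,\dots,s$) be scalars satisfying \[ a_{ij}a_{ik} - a_{ij}a_{jk} - a_{ik}a_{kj} = 0\qquad\text{for all } i,j,k\in\{1,\dots,s\}\text{ with } j\neq k. \] Then: (a) for all $i\neq j$, if $a_{ij}\neq0$ then $a_{ji}=0$; (b) for all $i,j,k$, if $a_{ik}\neq0$ and $a_{kj}\neq0$, then $a_{ij}\neq0$. *)

From mathcomp Require Import all_boot all_algebra.
Set Implicit Arguments. Unset Strict Implicit. Unset Printing Implicit Defensive.

From mathcomp Require Import all_boot all_algebra.
Import GRing.Theory.
Local Open Scope ring_scope.

(* Over an integral domain both parts drop out of the relation directly:
   taking [k = i] leaves [- a_ij a_ji = 0], and if [a_ij = 0] (with [j != k])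
   only [- a_ik a_kj = 0] survives. *)

Section SupportOfCoefficients.

Variables (R : idomainType) (I : eqType) (a : I -> I -> R).
Hypothesis rel : forall i j k, j != k ->
  a i j * a i k - a i j * a j k - a i k * a k j = 0.

Lemma coef_mul_transpose_eq0 i j : i != j -> a i j * a j i = 0.
Proof.
move=> ij; have := @rel i j i; rewrite eq_sym => /(_ ij).
by rewrite [a i i * _]mulrC addrAC subrr add0r => /eqP; rewrite oppr_eq0 => /eqP.
Qed.

Lemma coef_support_antisym i j : i != j -> a i j != 0 -> a j i = 0.
Proof.
move=> ij aij; have /eqP := coef_mul_transpose_eq0 _ _ ij.
by rewrite mulf_eq0 (negbTE aij) => /eqP.
Qed.

Lemma coef_support_trans i k j : a i k != 0 -> a k j != 0 -> a i j != 0.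
Proof.
move=> aik akj; have [-> // | jk] := eqVneq j k.
apply: contraNneq akj => aij; have /eqP := rel i _ _ jk.
by rewrite aij !mul0r subrr add0r oppr_eq0 mulf_eq0 (negbTE aik).
Qed.

End SupportOfCoefficients.

Theorem lemma2p4 (F : fieldType) (s : nat) (hs : (1 <= s)%N)
  (a : 'I_s -> 'I_s -> F)
  (h : forall i j k : 'I_s, j != k ->
         a i j * a i k - a i j * a j k - a i k * a k j = 0) :
  (forall i j : 'I_s, i != j -> a i j != 0 -> a j i = 0) /\
  (forall i j k : 'I_s, a i k != 0 -> a k j != 0 -> a i j != 0).
Proof.
split=> [i j | i j k]; first exact: coef_support_antisym.
exact: coef_support_trans.
Qed.
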